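(* Let $\vec n\in\mathbb{R}^9$ with $\sum_i n(i)=0$ and $\sum_i n(i)^2=1$, and for $r\ge0$ let $\rho_r=\sum_i[4p_r(i)-\frac13]\Pi_i$ with $p_r(i)=\frac19+r\,n(i)$. The set of $r\ge0$ for which $\rho_r$ is a density operator is an interval $[0,r(\vec n)]$, where $r(\vec n)$ is the smallest positive root of $4r^3F(\vec n)-r^2+\frac1{54}=0$. In particular $r(\vec n)=\frac1{3\sqrt6}$ when $F(\vec n)=0$, $r(\vec n)=\frac1{3\sqrt2}$ when $F(\vec n)=\frac1{\sqrt2}$, $r(\vec n)=\frac1{6\sqrt2}$ when $F(\vec n)=-\frac1{\sqrt2}$, and for all such $\vec n$, $$\frac1{6\sqrt2}\le r(\vec n)\le\frac1{3\sqrt2}.$$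
   Context: Let $\omega=e^{2\pi i/3}$, standard basis $|0\rangle,|1\rangle,|2\rangle$ of $\mathbb{C}^3$, $X|j\rangle=|j+1\bmod 3\rangle$, $Z|j\rangle=\omega^j|j\rangle$, $|\psi_0\rangle=\frac1{\sqrt2}(0,1,-1)^T$; for $m,n\in\{0,1,2\}$ and $i=3m+n+1$, $\Pi_i$ is the projector onto $X^mZ^n|\psi_0\rangle$ (the canonical Hesse SIC), so $p_r(i)=\frac13\operatorname{Tr}(\rho_r\Pi_i)$. Identify index $i=3m+n+1$ with $(m,n)\in\mathbb{Z}_3^2$; the 12 affine lines are $\{1,2,3\},\{4,5,6\},\{7,8,9\},\{1,4,7\},\{2,5,8\},\{3,6,9\},\{1,5,9\},\{2,6,7\},\{3,4,8\},\{1,6,8\},\{2,4,9\},\{3,5,7\}$, and $Q$ is the set of ordered triples $(i,j,k)$ of pairwise distinct indices with $\{i,j,k\}$ a line. For $v\in\mathbb{R}^9$ define $F(v)=\sum_i v(i)^3-\frac12\sum_{(i,j,k)\in Q}v(i)v(j)v(k)$. *)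

(* Complex scalars: an arbitrary numClosedFieldType C
   (an algebraically closed field with conjugation and order, e.g. C);
   "real numbers" are the elements x with x \is Num.real. *)
From HB Require Import structures.
From mathcomp Require Import all_boot all_order all_algebra.
Set Implicit Arguments. Unset Strict Implicit. Unset Printing Implicit Defensive.
Import Order.TTheory GRing.Theory Num.Theory.
Local Open Scope ring_scope.

Section Hesse.
Variable C : numClosedFieldType.

(* omega = e^{2 pi i / 3} = (-1 + i sqrt 3)/2 *)
Definition omega : C := (-1 + 'i * sqrtC 3) / 2%:R.

Definition ctr m n (A : 'M[C]_(m, n)) : 'M[C]_(n, m) := map_mx (fun x => x^*) A^T.

Definition shiftX : 'M[C]_3 :=
  \matrix_(a < 3, b < 3) ((nat_of_ord a == (b.+1 %% 3)%N)%:R).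
Definition clockZ : 'M[C]_3 :=
  \matrix_(a < 3, b < 3) ((a == b)%:R * omega ^+ a).

Definition psi0 : 'cV[C]_3 :=
  \col_(j < 3) ((if nat_of_ord j == 0%N then 0 else if nat_of_ord j == 1%N then 1 else -1)
                / sqrtC 2%:R).

(* index k : 'I_9 (0-based) corresponds to the paper's i = k+1 = 3m+n+1,
   with m = k %/ 3, n = k %% 3 *)
Definition sic_vec (k : 'I_9) : 'cV[C]_3 :=
  shiftX ^+ (k %/ 3) *m clockZ ^+ (k %% 3) *m psi0.

Definition Pi (k : 'I_9) : 'M[C]_3 := sic_vec k *m ctr (sic_vec k).

(* the 12 affine lines, 0-based indices *)
Definition hesse_lines : seq (seq nat) :=
  [:: [:: 0; 1; 2]%N; [:: 3; 4; 5]%N; [:: 6; 7; 8]%N;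
      [:: 0; 3; 6]%N; [:: 1; 4; 7]%N; [:: 2; 5; 8]%N;
      [:: 0; 4; 8]%N; [:: 1; 5; 6]%N; [:: 2; 3; 7]%N;
      [:: 0; 5; 7]%N; [:: 1; 3; 8]%N; [:: 2; 4; 6]%N].

Definition inQ (i j k : 'I_9) : bool :=
  [&& i != j, j != k, i != k &
      has (fun L => [&& nat_of_ord i \in L, nat_of_ord j \in L & nat_of_ord k \in L])
          hesse_lines].

Definition Fcub (v : 'I_9 -> C) : C :=
  \sum_i v i ^+ 3
  - 2%:R^-1 * \sum_i \sum_j \sum_k (if inQ i j k then v i * v j * v k else 0).

Definition prob (n : 'I_9 -> C) (r : C) (i : 'I_9) : C := 9%:R^-1 + r * n i.

Definition rho (n : 'I_9 -> C) (r : C) : 'M[C]_3 :=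
  \sum_i (4%:R * prob n r i - 3%:R^-1) *: Pi i.

Definition density (A : 'M[C]_3) : Prop :=
  [/\ ctr A = A, \tr A = 1 & forall v : 'cV[C]_3, 0 <= (ctr v *m A *m v) 0 0].

End Hesse.

(* Write N = sum_i n(i) Pi_i.  Since the nine projectors form a tight frame
   (sum_i Pi_i = 3 I), rho_r = I/3 + 4 r N, so rho_r is a state iff every
   eigenvalue d_k of the Hermitian matrix N satisfies 1/3 + 4 r d_k >= 0.
   An explicit computation of N in the standard basis, with entries in
   Z[omega] (represented as a + b omega), gives the frame identities
     tr N = sum n,  tr N^2 = ((sum n)^2 + 3 sum n^2)/4,
     tr N^3 = ((sum n)^3 + 9 (sum n)(sum n^2) + 6 F(n))/16,
   hence the eigenvalues have power sums 0, 3/4 and 3F/8.  From these power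
   sums alone, 2 f(r) = prod_k (1/3 + 4 r d_k) for the cubic
   f(r) = 4 F r^3 - r^2 + 1/54; with m the least eigenvalue, m < 0 and
   1/8 <= m^2 <= 1/2, and R = -1/(12 m) is the smallest positive root of f,
   the admissible radii form [0, R], and 1/(6 sqrt 2) <= R <= 1/(3 sqrt 2).
   For the three special values of F the cubic factors explicitly. *)

From HB Require Import structures.
From mathcomp Require Import all_boot all_order all_algebra.
From mathcomp Require Import ring.
From Stdlib Require Import PeanoNat.
Set Implicit Arguments. Unset Strict Implicit. Unset Printing Implicit Defensive.
Import Order.TTheory GRing.Theory Num.Theory.
Local Open Scope ring_scope.

Local Notation "''o3' k" := (@Ordinal 3 k isT) (at level 0, k at level 0).
Local Notation "''o9' k" := (@Ordinal 9 k isT) (at level 0, k at level 0).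

Section Spectral.
Variables (C : numClosedFieldType) (n : nat).

Definition psd (A : 'M[C]_n) : Prop := forall v : 'cV[C]_n, 0 <= (ctr v *m A *m v) 0 0.

Lemma ctr_mul m p (A : 'M[C]_(m, n)) (B : 'M[C]_(n, p)) : ctr (A *m B) = ctr B *m ctr A.
Proof. by rewrite /ctr trmx_mul map_mxM. Qed.

Lemma ctrK m (A : 'M[C]_(m, n)) : ctr (ctr A) = A.
Proof. by apply/matrixP => i j; rewrite !mxE conjCK. Qed.

Lemma herm_spectral (A : 'M[C]_n) : ctr A = A ->
  exists P : 'M[C]_n, exists d : 'rV[C]_n,
    [/\ ctr P *m P = 1%:M, P *m ctr P = 1%:M, forall i, d 0 i \is Num.real
      & A = ctr P *m diag_mx d *m P].
Proof.
move=> hA.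
have herm : A \is hermsymmx by apply/is_hermitianmxP; rewrite expr0 scale1r; exact: esym hA.
have unit := spectral_unitarymx A; have inv := invmx_unitary unit.
exists (spectralmx A), (spectral_diag A); split.
- by rewrite -[ctr _]inv mulVmx ?spectral_unit.
- by rewrite -[ctr _]inv mulmxV ?spectral_unit.
- by move=> i; apply: (mxOverP (hermitian_spectral_diag_real herm)).
- by rewrite -[ctr _]inv; apply/orthomx_spectralP; exact: hermitian_normalmx.
Qed.

Lemma tr_conj (P Q M : 'M[C]_n) : P *m Q = 1%:M -> \tr (Q *m M *m P) = \tr M.
Proof. by move=> PQ; rewrite mxtrace_mulC mulmxA PQ mul1mx. Qed.

Lemma conj_mulmx (P Q A B : 'M[C]_n) : P *m Q = 1%:M ->
  (Q *m A *m P) *m (Q *m B *m P) = Q *m (A *m B) *m P.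
Proof. by move=> PQ; rewrite !mulmxA -[Q *m A *m P *m Q]mulmxA PQ mulmx1. Qed.

Lemma tr_diag_sq (d : 'rV[C]_n) : \tr (diag_mx d *m diag_mx d) = \sum_i d 0 i ^+ 2.
Proof. by rewrite mulmx_diag mxtrace_diag; apply: eq_bigr => i _; rewrite mxE. Qed.

Lemma tr_diag_cube (d : 'rV[C]_n) :
  \tr (diag_mx d *m diag_mx d *m diag_mx d) = \sum_i d 0 i ^+ 3.
Proof. by rewrite !mulmx_diag mxtrace_diag; apply: eq_bigr => i _; rewrite !mxE -expr2 -exprSr. Qed.

Lemma conj_traces (P A : 'M[C]_n) (d : 'rV[C]_n) :
  P *m ctr P = 1%:M -> A = ctr P *m diag_mx d *m P ->
  [/\ \tr A = \sum_i d 0 i, \tr (A *m A) = \sum_i d 0 i ^+ 2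
    & \tr (A *m A *m A) = \sum_i d 0 i ^+ 3].
Proof.
move=> PP ->; split; first by rewrite tr_conj // mxtrace_diag.
  by rewrite conj_mulmx // tr_conj // tr_diag_sq.
by rewrite !conj_mulmx // tr_conj // tr_diag_cube.
Qed.

(* Positivity is invariant under unitary conjugation (v <-> P v). *)
Lemma psd_conj (P M : 'M[C]_n) : P *m ctr P = 1%:M ->
  psd (ctr P *m M *m P) <-> psd M.
Proof.
move=> PP; split=> psdM v; last by have := psdM (P *m v); rewrite ctr_mul !mulmxA.
have := psdM (ctr P *m v); rewrite ctr_mul ctrK -!mulmxA !(mulmxA P (ctr P)) PP !mul1mx.
by rewrite mulmxA.
Qed.

Lemma psd_diag (d : 'rV[C]_n) : psd (diag_mx d) <-> forall i, 0 <= d 0 i.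
Proof.
have qform v : (ctr v *m diag_mx d *m v) 0 0 = \sum_i d 0 i * (v i 0 * (v i 0)^*).
  by rewrite mul_mx_diag !mxE; apply: eq_bigr => i _; rewrite !mxE mulrAC mulrC [_^* * _]mulrC.
split=> [psdD i | d_ge0 v]; last first.
  by rewrite qform sumr_ge0 // => i _; rewrite mulr_ge0 // mul_conjC_ge0.
have := psdD (delta_mx i 0); rewrite qform (bigD1 i) //= big1 => [|j ji].
  by rewrite !mxE !eqxx /= conjC1 !mulr1 addr0.
by rewrite !mxE (negbTE ji) mul0r mulr0.
Qed.

End Spectral.

Definition sic_cubic (R : numFieldType) (F r : R) : R :=
  4%:R * r ^+ 3 * F - r ^+ 2 + 54%:R^-1.

(* The eigenvalue 1/3 + 4 r d of I/3 + 4 r N attached to an eigenvalue d of N. *)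
Definition eig_weight (R : numFieldType) (r d : R) : R := 3%:R^-1 + 4%:R * r * d.

Lemma eig_weight_mono (R : numFieldType) (r a b : R) :
  0 <= r -> a <= b -> eig_weight r a <= eig_weight r b.
Proof. by move=> r0 ab; rewrite lerD2l ler_wpM2l // mulr_ge0 // ler0n. Qed.

Lemma min3_exists (R : numDomainType) (a b c : R) :
  a \is Num.real -> b \is Num.real -> c \is Num.real ->
  exists2 m, [\/ m = a, m = b | m = c] & [/\ m <= a, m <= b & m <= c].
Proof.
move=> ra rb rc.
have [ab|ba] := real_leP ra rb.
  have [ac|ca] := real_leP ra rc; first by exists a; [constructor 1 | split].
  by exists c; [constructor 3 | split; [exact: ltW | exact: le_trans (ltW ca) ab |]].
have [bc|cb] := real_leP rb rc; first by exists b; [constructor 2 | split; [exact: ltW | |]].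
by exists c; [constructor 3 | split; [exact: ltW (lt_trans cb ba) | exact: ltW |]].
Qed.

(* Each number of a real triple with power sums 0 and 3/4 has square at most 1/2,
   because 1/2 - a^2 = (b - c)^2 / 3 on that variety. *)
Lemma sq_le_half (R : numFieldType) (a b c : R) :
  b \is Num.real -> c \is Num.real ->
  a + b + c = 0 -> a ^+ 2 + b ^+ 2 + c ^+ 2 = 3%:R / 4%:R -> a ^+ 2 <= 2%:R^-1.
Proof.
move=> rb rc s1 s2.
have ha : a = - (b + c) by rewrite -[RHS]add0r -s1; ring.
have -> : 2%:R^-1 = a ^+ 2 + 3%:R^-1 * (b - c) ^+ 2
                    + (2%:R / 3%:R) * (3%:R / 4%:R - (a ^+ 2 + b ^+ 2 + c ^+ 2)).
  by rewrite ha; field.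
rewrite s2 subrr mulr0 addr0 lerDl mulr_ge0 ?invr_ge0 ?ler0n //.
by rewrite real_exprn_even_ge0 // rpredB.
Qed.

Section EigenvalueTriple.
(* A real triple d0, d1, d2 with power sums 0, 3/4 and 3F/8: the spectrum of N. *)
Context {R : numFieldType} {d0 d1 d2 F : R}.
Hypotheses (real0 : d0 \is Num.real) (real1 : d1 \is Num.real) (real2 : d2 \is Num.real).
Hypothesis sum1 : d0 + d1 + d2 = 0.
Hypothesis sum2 : d0 ^+ 2 + d1 ^+ 2 + d2 ^+ 2 = 3%:R / 4%:R.
Hypothesis sum3 : d0 ^+ 3 + d1 ^+ 3 + d2 ^+ 3 = 3%:R / 8%:R * F.

Lemma elem_sym2 : d0 * d1 + d1 * d2 + d2 * d0 = - (3%:R / 8%:R).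
Proof.
have -> : d0 * d1 + d1 * d2 + d2 * d0
          = ((d0 + d1 + d2) ^+ 2 - (d0 ^+ 2 + d1 ^+ 2 + d2 ^+ 2)) / 2%:R by field.
by rewrite sum1 sum2; field.
Qed.

Lemma elem_sym3 : d0 * d1 * d2 = F / 8%:R.
Proof.
have -> : d0 * d1 * d2 = ((d0 ^+ 3 + d1 ^+ 3 + d2 ^+ 3) - (d0 + d1 + d2) ^+ 3
            + 3%:R * (d0 + d1 + d2) * (d0 * d1 + d1 * d2 + d2 * d0)) / 3%:R by field.
by rewrite sum1 sum3; field.
Qed.

(* The cubic is, up to the factor 2, the characteristic product of I/3 + 4 r N. *)
Lemma sic_cubic_factor (r : R) :
  2%:R * sic_cubic F r = eig_weight r d0 * eig_weight r d1 * eig_weight r d2.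
Proof.
have -> : eig_weight r d0 * eig_weight r d1 * eig_weight r d2 =
  27%:R^-1 + 4%:R / 9%:R * r * (d0 + d1 + d2)
  + 16%:R / 3%:R * r ^+ 2 * (d0 * d1 + d1 * d2 + d2 * d0)
  + 64%:R * r ^+ 3 * (d0 * d1 * d2) by rewrite /eig_weight; field.
by rewrite sum1 elem_sym2 elem_sym3 /sic_cubic; field.
Qed.

Variable m : R.
Hypothesis m_mem : [\/ m = d0, m = d1 | m = d2].
Hypothesis m_min : [/\ m <= d0, m <= d1 & m <= d2].

(* sum_k (d_k - m)(d_k + 2m) = 3/4 - 6 m^2 and each term is nonpositive. *)
Lemma min_eig_sq_ge : 8%:R^-1 <= m ^+ 2.
Proof.
case: m_min => m0 m1 m2.
have term (a b c : R) : m <= a -> m <= b -> m <= c -> a + b + c = 0 ->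
    0 <= (a - m) * - (a + (m + m)).
  move=> ma mb mc abc.
  by rewrite mulr_ge0 ?subr_ge0 // oppr_ge0 -abc -addrA lerD2l lerD.
have s1 : d1 + d2 + d0 = 0 by rewrite -sum1; ring.
have s2 : d2 + d0 + d1 = 0 by rewrite -sum1; ring.
have := addr_ge0 (addr_ge0 (term _ _ _ m0 m1 m2 sum1) (term _ _ _ m1 m2 m0 s1))
                 (term _ _ _ m2 m0 m1 s2).
have -> : (d0 - m) * - (d0 + (m + m)) + (d1 - m) * - (d1 + (m + m))
          + (d2 - m) * - (d2 + (m + m))
        = 6%:R * m ^+ 2 - (d0 ^+ 2 + d1 ^+ 2 + d2 ^+ 2) - m * (d0 + d1 + d2) by ring.
rewrite sum1 sum2 mulr0 subr0 subr_ge0 => h.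
have -> : m ^+ 2 = 6%:R^-1 * (6%:R * m ^+ 2) by field.
have -> : 8%:R^-1 = 6%:R^-1 * (3%:R / 4%:R) :> R by field.
by rewrite ler_pM2l ?invr_gt0 ?ltr0n.
Qed.

Lemma min_eig_sq_le : m ^+ 2 <= 2%:R^-1.
Proof.
case: m_mem => ->; first exact: sq_le_half sum1 sum2.
  by apply: (sq_le_half real2 real0); rewrite -?sum1 -?sum2; ring.
by apply: (sq_le_half real0 real1); rewrite -?sum1 -?sum2; ring.
Qed.

(* 3 m <= d0 + d1 + d2 = 0, and m <> 0 since m^2 >= 1/8. *)
Lemma min_eig_neg : m < 0.
Proof.
case: m_min => m0 m1 m2.
have m_le0 : m *+ 3 <= 0 by rewrite -sum1 !mulrS mulr0n addr0 addrA lerD // lerD.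
rewrite lt_neqAle -(pmulrn_lle0 m (isT : (0 < 3)%N)) m_le0 andbT.
apply: contraTneq min_eig_sq_ge => ->.
by rewrite expr0n /= lt_geF // invr_gt0 ltr0n.
Qed.

(* The critical radius: the weight of the least eigenvalue vanishes exactly there. *)
Definition r_max : R := - (12%:R * m)^-1.

Lemma r_max_gt0 : 0 < r_max.
Proof. by rewrite oppr_gt0 invr_lt0 pmulr_rlt0 ?ltr0n ?min_eig_neg. Qed.

Lemma eig_weight_min (r : R) : eig_weight r m = 3%:R^-1 * (1 - r / r_max).
Proof.
have m0 : m != 0 by rewrite lt_eqF ?min_eig_neg.
by rewrite /eig_weight /r_max; field.
Qed.

Lemma eig_weight_min_ge0 (r : R) : (0 <= eig_weight r m) = (r <= r_max).
Proof.
by rewrite eig_weight_min pmulr_rge0 ?invr_gt0 ?ltr0n // subr_ge0 ler_pdivrMr ?mul1r ?r_max_gt0.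
Qed.

(* All three weights are nonnegative iff the least one is, i.e. iff r <= r_max. *)
Lemma eig_weights_ge0 (r : R) : 0 <= r ->
  [/\ 0 <= eig_weight r d0, 0 <= eig_weight r d1 & 0 <= eig_weight r d2] <-> r <= r_max.
Proof.
move=> r0; rewrite -eig_weight_min_ge0; case: m_min => m0 m1 m2; split.
  by case: m_mem => -> [].
by move=> wm; split; apply: le_trans wm (eig_weight_mono _ _).
Qed.

(* r_max is a root: there the weight of m, a factor of 2 f, vanishes. *)
Lemma r_max_root : sic_cubic F r_max = 0.
Proof.
have /eqP : 2%:R * sic_cubic F r_max = 0.
  have wm : eig_weight r_max m = 0 by rewrite eig_weight_min divff ?subrr ?mulr0 // gt_eqF ?r_max_gt0.
  by rewrite sic_cubic_factor; case: m_mem => <-; rewrite wm ?mulr0 ?mul0r.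
by rewrite mulf_eq0 pnatr_eq0 => /eqP.
Qed.

(* A positive root kills some weight, which forces the least weight to be <= 0. *)
Lemma r_max_least (x : R) : 0 < x -> sic_cubic F x = 0 -> r_max <= x.
Proof.
move=> x0 fx; case: m_min => m0 m1 m2.
have : eig_weight x m <= 0.
  move/eqP: (sic_cubic_factor x); rewrite fx mulr0 eq_sym !mulf_eq0 -orbA.
  by case/or3P => /eqP <-; apply: eig_weight_mono => //; exact: ltW.
rewrite eig_weight_min pmulr_rle0 ?invr_gt0 ?ltr0n // subr_le0 ler_pdivlMr ?r_max_gt0 //.
by rewrite mul1r.
Qed.

Lemma threshold_spec :
  [/\ 0 < r_max, sic_cubic F r_max = 0,
      forall x, 0 < x -> sic_cubic F x = 0 -> r_max <= x,
      forall r, 0 <= r ->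
        [/\ 0 <= eig_weight r d0, 0 <= eig_weight r d1 & 0 <= eig_weight r d2]
        <-> r <= r_max
    & [/\ m < 0, 8%:R^-1 <= m ^+ 2 & m ^+ 2 <= 2%:R^-1]].
Proof.
split; [exact: r_max_gt0 | exact: r_max_root | exact: r_max_least
       | exact: eig_weights_ge0 | ].
by split; [exact: min_eig_neg | exact: min_eig_sq_ge | exact: min_eig_sq_le].
Qed.

End EigenvalueTriple.

Section SpecialRoots.
Variable C : numClosedFieldType.
Local Notation s := (sqrtC (2%:R : C)).

Lemma sqrt2_gt0 : 0 < s. Proof. by rewrite sqrtC_gt0 ltr0n. Qed.

Lemma sqrt2_sq : s ^+ 2 = 2%:R. Proof. by rewrite sqrtCK. Qed.

Lemma sqrt2_inv : s^-1 = s / 2%:R.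
Proof.
have s0 : s != 0 by rewrite gt_eqF ?sqrt2_gt0.
by apply: (mulfI s0); rewrite mulfV // mulrA -expr2 sqrt2_sq divff // pnatr_eq0.
Qed.

Lemma sic_cubic_root_F0 (x : C) : 0 < x -> sic_cubic 0 x = 0 -> x = (3%:R * sqrtC 6%:R)^-1.
Proof.
move=> x0; rewrite /sic_cubic mulr0 add0r => /eqP; rewrite addrC subr_eq0 => /eqP x2.
apply/eqP; rewrite -(eqrXn2 (isT : (0 < 2)%N)) ?(ltW x0) ?invr_ge0 ?mulr_ge0 ?ler0n ?sqrtC_ge0 //.
by rewrite -x2 exprVn exprMn sqrtCK -natrX -natrM.
Qed.

(* For F = 1/sqrt 2, f(r) = 2 sqrt 2 (r - sqrt 2/6)^2 (r + sqrt 2/12). *)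
Lemma sic_cubic_root_Fpos (x : C) : 0 < x -> sic_cubic s^-1 x = 0 -> x = (3%:R * s)^-1.
Proof.
move=> x0 fx.
have factor : sic_cubic s^-1 x = 2%:R * s * (x - s / 6%:R) ^+ 2 * (x + s / 12%:R).
  have -> : 2%:R * s * (x - s / 6%:R) ^+ 2 * (x + s / 12%:R)
    = 2%:R * s * x ^+ 3 - s ^+ 2 / 2%:R * x ^+ 2 + (s ^+ 2) ^+ 2 / 216%:R by field.
  by rewrite sqrt2_sq sqrt2_inv /sic_cubic; field.
have s0 : s != 0 by rewrite gt_eqF ?sqrt2_gt0.
have pos : x + s / 12%:R != 0 by rewrite gt_eqF ?addr_gt0 ?divr_gt0 ?sqrt2_gt0 ?ltr0n.
move: fx; rewrite factor => /eqP; rewrite !mulf_eq0 pnatr_eq0 (negbTE s0) (negbTE pos) /=.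
by rewrite orbF orbb subr_eq0 => /eqP ->; rewrite invfM sqrt2_inv; field.
Qed.

(* For F = -1/sqrt 2, f(r) = -2 sqrt 2 (r - sqrt 2/12) (r + sqrt 2/6)^2. *)
Lemma sic_cubic_root_Fneg (x : C) : 0 < x -> sic_cubic (- s^-1) x = 0 -> x = (6%:R * s)^-1.
Proof.
move=> x0 fx.
have factor : sic_cubic (- s^-1) x = - (2%:R * s) * (x - s / 12%:R) * (x + s / 6%:R) ^+ 2.
  have -> : - (2%:R * s) * (x - s / 12%:R) * (x + s / 6%:R) ^+ 2
    = - (2%:R * s) * x ^+ 3 - s ^+ 2 / 2%:R * x ^+ 2 + (s ^+ 2) ^+ 2 / 216%:R by field.
  by rewrite sqrt2_sq sqrt2_inv /sic_cubic; field.
have s0 : s != 0 by rewrite gt_eqF ?sqrt2_gt0.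
have pos : x + s / 6%:R != 0 by rewrite gt_eqF ?addr_gt0 ?divr_gt0 ?sqrt2_gt0 ?ltr0n.
move: fx; rewrite factor => /eqP; rewrite !mulf_eq0 oppr_eq0 mulf_eq0 pnatr_eq0.
by rewrite (negbTE s0) (negbTE pos) /= orbF subr_eq0 => /eqP ->; rewrite invfM sqrt2_inv; field.
Qed.

Lemma r_max_bounds (m : C) : m < 0 -> 8%:R^-1 <= m ^+ 2 -> m ^+ 2 <= 2%:R^-1 ->
  (6%:R * s)^-1 <= - (12%:R * m)^-1 <= (3%:R * s)^-1.
Proof.
move=> m0 lo hi.
have pos (k : nat) : (0 < k)%N -> 0 <= (k%:R * s)^-1.
  by rewrite invr_ge0 mulr_ge0 ?ler0n ?ltW ?sqrt2_gt0.
have r0 : 0 <= - (12%:R * m)^-1 by rewrite oppr_ge0 invr_le0 pmulr_rle0 ?ltr0n ?ltW.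
have r2 : (- (12%:R * m)^-1) ^+ 2 = (144%:R * m ^+ 2)^-1 by rewrite sqrrN exprVn exprMn -natrX.
have sq (k : nat) : ((k%:R * s)^-1) ^+ 2 = ((k * k * 2)%:R)^-1 :> C.
  by rewrite exprVn exprMn sqrt2_sq -natrX -natrM mulnn.
have m2 : 0 < 144%:R * m ^+ 2.
  by rewrite mulr_gt0 ?ltr0n //; apply: lt_le_trans lo; rewrite invr_gt0 ltr0n.
apply/andP; split; rewrite -ler_sqr ?nnegrE ?pos // r2 sq lef_pV2 ?posrE ?m2 ?ltr0n //.
- have -> : (6 * 6 * 2)%:R = 144%:R * 2%:R^-1 :> C by rewrite natrM; field.
  by rewrite ler_pM2l ?ltr0n.
- have -> : (3 * 3 * 2)%:R = 144%:R * 8%:R^-1 :> C by rewrite !natrM; field.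
  by rewrite ler_pM2l ?ltr0n.
Qed.

End SpecialRoots.

Section Hesse.
Variable C : numClosedFieldType.
Local Notation w := (omega C).

Lemma sum3E (f : 'I_3 -> C) : \sum_i f i = f 'o3 0 + f 'o3 1 + f 'o3 2.
Proof. by rewrite !big_ord_recr big_ord0 /= add0r; congr (_ + _ + _); congr f; apply: val_inj. Qed.

Lemma sum9E (f : 'I_9 -> C) :
  \sum_i f i = f 'o9 0 + f 'o9 1 + f 'o9 2 + f 'o9 3 + f 'o9 4 + f 'o9 5
               + f 'o9 6 + f 'o9 7 + f 'o9 8.
Proof.
by rewrite !big_ord_recr big_ord0 /= add0r; repeat congr (_ + _); congr f; apply: val_inj.
Qed.

Lemma forall_ord3 (P : 'I_3 -> Prop) :
  (forall i, P i) <-> [/\ P 'o3 0, P 'o3 1 & P 'o3 2].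
Proof.
split=> [h | [p0 p1 p2] i]; first by split.
by case: i => [[|[|[|i]]] hi] //; rewrite (eq_irrelevance hi isT).
Qed.

Lemma omega_sq : w ^+ 2 = -1 - w.
Proof.
have h3 : sqrtC (3%:R : C) ^+ 2 = 3%:R by rewrite sqrtCK.
have hi : ('i : C) ^+ 2 = -1 by rewrite sqrCi.
rewrite /omega.
have -> : ((-1 + 'i * sqrtC 3%:R) / 2%:R) ^+ 2 =
  (1 + ('i : C) ^+ 2 * sqrtC 3%:R ^+ 2 - 2%:R * 'i * sqrtC 3%:R) / 4%:R :> C by field.
by rewrite h3 hi; field.
Qed.

Lemma omega_cube : w ^+ 3 = 1.
Proof. by rewrite exprS omega_sq mulrBr mulrN1 -expr2 omega_sq; ring. Qed.

Lemma omega_conj : w^* = w ^+ 2.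
Proof.
rewrite omega_sq /omega fmorph_div rmorphD rmorphN rmorph1 rmorphM /= conjCi conjC_nat.
by rewrite (geC0_conj (x := sqrtC 3%:R)) ?sqrtC_ge0 ?ler0n //; field.
Qed.

Lemma omegaX k : w ^+ k = nth 0 [:: 1; w; -1 - w] (Nat.modulo k 3).
Proof.
rewrite {1}(Nat.div_mod_eq k 3) plusE multE exprD exprM omega_cube expr1n mul1r.
case: (Nat.modulo k 3) (Nat.mod_upper_bound k 3 (Nat.neq_succ_0 2)) => [|[|[|r]]] //= h.
- by rewrite omega_sq.
- by move/ssrnat.ltP: h.
Qed.

Lemma conj_omegaX k : (w ^+ k)^* = w ^+ (2 * k)%N.
Proof. by rewrite exprM -omega_conj rmorphXn. Qed.

(* Coordinates of the SIC vector X^m Z^j psi_0 (k = 3m + j), up to the factor 1/sqrt 2: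
   the entry at a is 0, omega^j or -omega^(2j) according to (a - m) mod 3. *)
Definition sic_sign (k : 'I_9) (a : 'I_3) : C :=
  let c := Nat.modulo (a + 3 - Nat.div k 3) 3 in
  if c == 0%N then 0 else if c == 1%N then 1 else -1.

Definition sic_phase (k : 'I_9) (a : 'I_3) : nat :=
  Nat.mul (Nat.modulo k 3) (Nat.modulo (a + 3 - Nat.div k 3) 3).

Definition sic_coord (k : 'I_9) (a : 'I_3) : C := sic_sign k a * w ^+ sic_phase k a.

Lemma sic_vecE (k : 'I_9) (a : 'I_3) : sic_vec C k a 0 = sic_coord k a / sqrtC 2%:R.
Proof.
case: k => k Hk; case: a => a Ha; rewrite /sic_vec /sic_coord /sic_sign /sic_phase /=.
do 9?[case: k Hk => [|k] Hk]; do 3?[case: a Ha => [|a] Ha] => //=.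
all: rewrite ?expr0 ?expr1 ?expr2 -?mulmxE ?mul1mx ?mulmx1.
all: do 4 (rewrite ?mxE ?sum3E /=).
all: ring.
Qed.

Lemma Pi_herm (k : 'I_9) : ctr (Pi C k) = Pi C k.
Proof. by rewrite /Pi ctr_mul ctrK. Qed.

Lemma Pi_entry (k : 'I_9) (a b : 'I_3) :
  2%:R * Pi C k a b
  = sic_sign k a * sic_sign k b * w ^+ (sic_phase k a + 2 * sic_phase k b).
Proof.
have sign_real : (sic_sign k b)^* = sic_sign k b.
  rewrite /sic_sign; case: ifP => _; rewrite ?rmorph0 //.
  by case: ifP => _; rewrite ?rmorph1 ?rmorphN1.
rewrite /Pi mxE big_ord1 /ctr [map_mx _ _ _ _]mxE [trmx _ _ _]mxE !sic_vecE fmorph_div /=.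
rewrite (geC0_conj (x := sqrtC 2%:R)) ?sqrtC_ge0 ?ler0n //.
rewrite /sic_coord rmorphM /= sign_real conj_omegaX exprD.
set s := sqrtC 2%:R.
have h2 : s ^+ 2 = 2%:R by rewrite sqrtCK.
have h0 : s != 0 by rewrite sqrtC_eq0 pnatr_eq0.
by rewrite -[in LHS]h2; field.
Qed.

(* Elements a + b omega of Z[omega]; products are reduced with omega^2 = -1 - omega. *)
Definition eis (a b : C) : C := a + b * w.

Lemma eisD a b c d : eis a b + eis c d = eis (a + c) (b + d).
Proof. by rewrite /eis; ring. Qed.

Lemma eisM a b c d : eis a b * eis c d = eis (a * c - b * d) (a * d + b * c - b * d).
Proof.
have e : eis a b * eis c d = a * c + (a * d + b * c) * w + b * d * w ^+ 2 by rewrite /eis; ring.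
by rewrite e omega_sq /eis; ring.
Qed.

Definition sic_combo (x : 'I_9 -> C) : 'M[C]_3 := \sum_i x i *: Pi C i.

(* The entries of 2 N, written in Z[omega]-form. *)
Definition sic_combo2_entry (x : 'I_9 -> C) (a b : nat) : C :=
  match a, b with
  | 0, 0 => eis (x 'o9 3 + x 'o9 4 + x 'o9 5 + x 'o9 6 + x 'o9 7 + x 'o9 8) 0
  | 0, 1 => eis (x 'o9 7 - x 'o9 6) (x 'o9 7 - x 'o9 8)
  | 0, 2 => eis (x 'o9 5 - x 'o9 3) (x 'o9 5 - x 'o9 4)
  | 1, 0 => eis (x 'o9 8 - x 'o9 6) (x 'o9 8 - x 'o9 7)
  | 1, 1 => eis (x 'o9 0 + x 'o9 1 + x 'o9 2 + x 'o9 6 + x 'o9 7 + x 'o9 8) 0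
  | 1, 2 => eis (x 'o9 1 - x 'o9 0) (x 'o9 1 - x 'o9 2)
  | 2, 0 => eis (x 'o9 4 - x 'o9 3) (x 'o9 4 - x 'o9 5)
  | 2, 1 => eis (x 'o9 2 - x 'o9 0) (x 'o9 2 - x 'o9 1)
  | _, _ => eis (x 'o9 0 + x 'o9 1 + x 'o9 2 + x 'o9 3 + x 'o9 4 + x 'o9 5) 0
  end.

Definition sic_combo2 (x : 'I_9 -> C) : 'M[C]_3 := \matrix_(a, b) sic_combo2_entry x a b.

Lemma sic_combo_entries (x : 'I_9 -> C) (a b : 'I_3) :
  2%:R * sic_combo x a b = sic_combo2_entry x a b.
Proof.
rewrite /sic_combo summxE sum9E ![(_ *: Pi C _) _ _]mxE !mulrDr.
rewrite ![2%:R * (x _ * _)]mulrCA !Pi_entry /sic_sign /sic_phase.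
case: a => [[|[|[|a]]] Ha] //; case: b => [[|[|[|b]]] Hb] //=.
all: rewrite -plusE -multE /= !omegaX /= /eis; ring.
Qed.

Lemma sic_comboE (x : 'I_9 -> C) : sic_combo x = 2%:R^-1 *: sic_combo2 x.
Proof.
apply/matrixP => a b; rewrite !mxE -sic_combo_entries mulrA mulVf ?mul1r //.
by rewrite pnatr_eq0.
Qed.

Definition hesse_lines_sum (x : 'I_9 -> C) : C :=
  x 'o9 0 * x 'o9 1 * x 'o9 2 + x 'o9 3 * x 'o9 4 * x 'o9 5 + x 'o9 6 * x 'o9 7 * x 'o9 8
  + x 'o9 0 * x 'o9 3 * x 'o9 6 + x 'o9 1 * x 'o9 4 * x 'o9 7 + x 'o9 2 * x 'o9 5 * x 'o9 8
  + x 'o9 0 * x 'o9 4 * x 'o9 8 + x 'o9 1 * x 'o9 5 * x 'o9 6 + x 'o9 2 * x 'o9 3 * x 'o9 7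
  + x 'o9 0 * x 'o9 5 * x 'o9 7 + x 'o9 1 * x 'o9 3 * x 'o9 8 + x 'o9 2 * x 'o9 4 * x 'o9 6.

(* Each line contributes its 6 orderings to Q, so F = sum x^3 - 3 (line products). *)
Lemma FcubE (x : 'I_9 -> C) : Fcub x = \sum_i x i ^+ 3 - 3%:R * hesse_lines_sum x.
Proof. by rewrite /Fcub; congr (_ - _); rewrite !sum9E /inQ /= /hesse_lines_sum; field. Qed.

Lemma tr_sic_combo2_sq (x : 'I_9 -> C) :
  \tr (sic_combo2 x *m sic_combo2 x) = (\sum_i x i) ^+ 2 + 3%:R * \sum_i x i ^+ 2.
Proof. by rewrite /mxtrace sum3E !mxE !sum3E !mxE /= !(eisM, eisD) !sum9E /eis; ring. Qed.

Lemma tr_sic_combo2_cube (x : 'I_9 -> C) :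
  2%:R * \tr (sic_combo2 x *m sic_combo2 x *m sic_combo2 x)
  = (\sum_i x i) ^+ 3 + 9%:R * (\sum_i x i) * (\sum_i x i ^+ 2) + 6%:R * Fcub x.
Proof.
rewrite FcubE /hesse_lines_sum /mxtrace sum3E !mxE !sum3E !mxE !sum3E !mxE /=.
by rewrite !(eisM, eisD) !sum9E /eis; ring.
Qed.

Lemma tr_sic_combo (x : 'I_9 -> C) : \tr (sic_combo x) = \sum_i x i.
Proof. by rewrite sic_comboE mxtraceZ /mxtrace sum3E !mxE /= !eisD sum9E /eis; field. Qed.

Lemma tr_sic_combo_sq (x : 'I_9 -> C) :
  \tr (sic_combo x *m sic_combo x) = ((\sum_i x i) ^+ 2 + 3%:R * \sum_i x i ^+ 2) / 4%:R.
Proof.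
rewrite sic_comboE -scalemxAl -scalemxAr scalerA mxtraceZ tr_sic_combo2_sq.
by field.
Qed.

Lemma tr_sic_combo_cube (x : 'I_9 -> C) :
  \tr (sic_combo x *m sic_combo x *m sic_combo x)
  = ((\sum_i x i) ^+ 3 + 9%:R * (\sum_i x i) * (\sum_i x i ^+ 2) + 6%:R * Fcub x) / 16%:R.
Proof.
rewrite sic_comboE -!scalemxAl -!scalemxAr !scalerA -scalemxAl scalerA mxtraceZ.
by rewrite -tr_sic_combo2_cube; field.
Qed.

Lemma sum_Pi : \sum_i Pi C i = 3%:R%:M.
Proof.
have -> : \sum_i Pi C i = sic_combo (fun _ => 1 : C) by apply: eq_bigr => i _; rewrite scale1r.
apply/matrixP => a b; rewrite sic_comboE !mxE.
by case: a => [[|[|[|a]]] Ha] //; case: b => [[|[|[|b]]] Hb] //=; rewrite /eis; field.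
Qed.

Lemma sic_combo_herm (x : 'I_9 -> C) : (forall i, x i \is Num.real) ->
  ctr (sic_combo x) = sic_combo x.
Proof.
move=> x_real; apply/matrixP => a b; rewrite !mxE !summxE rmorph_sum.
apply: eq_bigr => k _; rewrite !mxE rmorphM /= (CrealP (x_real k)).
by have /matrixP/(_ a b) := Pi_herm k; rewrite !mxE => ->.
Qed.

(* rho_r = I/3 + 4 r N, by the tight frame property. *)
Lemma rhoE (x : 'I_9 -> C) (r : C) :
  rho x r = 3%:R^-1 *: 1%:M + (4%:R * r) *: sic_combo x.
Proof.
rewrite /rho (eq_bigr (fun i => 9%:R^-1 *: Pi C i + (4%:R * r) *: (x i *: Pi C i))).
  rewrite big_split /= -!scaler_sumr sum_Pi !scale_scalar_mx; congr (_%:M + _).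
  by field.
by move=> i _; rewrite scalerA -scalerDl /prob; congr (_ *: _); field.
Qed.

Lemma density_rho (x : 'I_9 -> C) (r : C) : (forall i, x i \is Num.real) ->
  \sum_i x i = 0 -> r \is Num.real -> density (rho x r) <-> psd (rho x r).
Proof.
move=> x_real x_sum r_real; split=> [[] // | psd_rho]; split => //.
  apply/matrixP => a b; have /matrixP/(_ a b) := sic_combo_herm x_real.
  rewrite rhoE !mxE => herm.
  by rewrite rmorphD /= !rmorphM /= herm (CrealP r_real) fmorphV /= !conjC_nat eq_sym.
by rewrite rhoE mxtraceD !mxtraceZ tr_sic_combo x_sum mxtrace1 mulr0 addr0; field.
Qed.

(* In an eigenbasis of N, rho_r is diagonal with entries eig_weight r d_k. *)
Lemma psd_rho_weights (x : 'I_9 -> C) (r : C) (P : 'M[C]_3) (d : 'rV[C]_3) :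
  P *m ctr P = 1%:M -> ctr P *m P = 1%:M -> sic_combo x = ctr P *m diag_mx d *m P ->
  psd (rho x r) <-> forall i, 0 <= eig_weight r (d 0 i).
Proof.
move=> PP PhP N_eq.
have -> : rho x r = ctr P *m diag_mx (\row_i eig_weight r (d 0 i)) *m P.
  have -> : diag_mx (\row_i eig_weight r (d 0 i)) = 3%:R^-1 *: 1%:M + (4%:R * r) *: diag_mx d.
    by apply/matrixP => i j; rewrite !mxE; case: eqP => [->|_]; rewrite /eig_weight ?mulr1n ?mulr0n; ring.
  by rewrite rhoE N_eq mulmxDr mulmxDl -!scalemxAr -!scalemxAl mulmx1 PhP.
rewrite psd_conj // psd_diag.
by split=> h i; have := h i; rewrite mxE.
Qed.

End Hesse.

Theorem mainTheorem9 (C : numClosedFieldType) (n : 'I_9 -> C)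
    (hreal : forall i, n i \is Num.real)
    (hsum : \sum_i n i = 0)
    (hnorm : \sum_i n i ^+ 2 = 1) :
  let f := fun r : C => 4%:R * r ^+ 3 * Fcub n - r ^+ 2 + 54%:R^-1 in
  exists R : C,
    [/\ R \is Num.real, 0 < R, f R = 0 &
        forall x : C, x \is Num.real -> 0 < x -> f x = 0 -> R <= x] /\
    (forall r : C, r \is Num.real -> 0 <= r -> (density (rho n r) <-> r <= R)) /\
    (Fcub n = 0 -> R = (3%:R * sqrtC 6%:R)^-1) /\
    (Fcub n = (sqrtC 2%:R)^-1 -> R = (3%:R * sqrtC 2%:R)^-1) /\
    (Fcub n = - (sqrtC 2%:R)^-1 -> R = (6%:R * sqrtC 2%:R)^-1) /\
    ((6%:R * sqrtC 2%:R)^-1 <= R <= (3%:R * sqrtC 2%:R)^-1).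
Proof.
move=> f.
have [P [d [PhP PPh d_real N_eq]]] := herm_spectral (sic_combo_herm hreal).
have [tr1 tr2 tr3] := conj_traces PPh N_eq.
have s1 : d 0 'o3 0 + d 0 'o3 1 + d 0 'o3 2 = 0 by rewrite -sum3E -tr1 tr_sic_combo.
have s2 : d 0 'o3 0 ^+ 2 + d 0 'o3 1 ^+ 2 + d 0 'o3 2 ^+ 2 = 3%:R / 4%:R.
  by rewrite -(sum3E (fun i => d 0 i ^+ 2)) -tr2 tr_sic_combo_sq hsum hnorm; field.
have s3 : d 0 'o3 0 ^+ 3 + d 0 'o3 1 ^+ 3 + d 0 'o3 2 ^+ 3 = 3%:R / 8%:R * Fcub n.
  by rewrite -(sum3E (fun i => d 0 i ^+ 3)) -tr3 tr_sic_combo_cube hsum hnorm; field.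
have [m m_mem m_min] := min3_exists (d_real 'o3 0) (d_real 'o3 1) (d_real 'o3 2).
have [R_pos R_root R_least R_iff [m_neg m_lo m_hi]] :=
  threshold_spec (d_real _) (d_real _) (d_real _) s1 s2 s3 m_mem m_min.
exists (r_max m); split; [|split; [|split; [|split; [|split]]]].
- by split=> //; [exact: gtr0_real | move=> x _; exact: R_least].
- move=> r r_real r_ge0; apply: iff_trans (density_rho hreal hsum r_real) _.
  apply: iff_trans (psd_rho_weights r PPh PhP N_eq) _.
  by apply: iff_trans (forall_ord3 (fun i => 0 <= eig_weight r (d 0 i))) _; exact: R_iff.
- by move=> F0; rewrite F0 in R_root; exact: sic_cubic_root_F0 R_pos R_root.
- by move=> Fp; rewrite Fp in R_root; exact: sic_cubic_root_Fpos R_pos R_root.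
- by move=> Fm; rewrite Fm in R_root; exact: sic_cubic_root_Fneg R_pos R_root.
- exact: r_max_bounds m_neg m_lo m_hi.
Qed.
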